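(* Let $R$ be an integral domain, let $\mathbb{F}$ be a field containing $R$ in which the polynomials below split, and let $h,y\in R$ be nonzero. Let $a=(a_n)_{n\ge 0}$ be a linear recurrent sequence over $R$ of degree $r$ with characteristic polynomial $$f(t)=t^r+\sum_{i=1}^r(-1)^i\sigma_i t^{r-i}\in R[t],$$ whose zeros in $\mathbb{F}$ (with multiplicity) are $\alpha_1,\ldots,\alpha_r$, so that $\sigma_i$ is the $i$-th elementary symmetric function of $\alpha_1,\dots,\alpha_r$. Let $b=L^{(h,y)}(a)$, i.e. $b_n=\sum_{i=0}^n\binom{n}{i}h^iy^{n-i}a_i$. Then $b$ is a linear recurrent sequence of degree $r$ whose characteristic polynomial $g(t)$ has zeros $h\alpha_1+y,\ldots,h\alpha_r+y$. Moreover $$g(t)=t^r+\sum_{i=1}^r(-1)^i\overline{\sigma_i}\,t^{r-i},\qquad \overline{\sigma_i}=\sum_{k=0}^{i}\binom{r-k}{i-k}h^k y^{i-k}\sigma_k\quad (i=1,\ldots,r),$$ with the convention $\sigma_0=1$.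
   Context: A linear recurrent sequence of degree $r$ over $R$ with characteristic polynomial $f(t)=t^r-c_1t^{r-1}-\dots-c_r$ is a sequence $(a_n)_{n\ge0}$ in $R$ with $a_{n+r}=c_1a_{n+r-1}+\dots+c_ra_n$ for all $n\ge 0$. For $h,y\in R$ the generalized Binomial interpolated operator $L^{(h,y)}$ sends a sequence $a=(a_n)_{n\ge0}$ to the sequence $b$ with $b_n=\sum_{i=0}^n\binom{n}{i}h^iy^{n-i}a_i$ (in the paper it is introduced for nonzero $h,y$). *)

From HB Require Import structures.
From mathcomp Require Import all_boot all_order all_algebra.
Set Implicit Arguments. Unset Strict Implicit. Unset Printing Implicit Defensive.
Import Order.TTheory GRing.Theory Num.Theory.
Local Open Scope ring_scope.

Definition lrs (R : comNzRingType) (r : nat) (c : nat -> R) (a : nat -> R) : Prop :=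
  forall n : nat, a (n + r)%N = \sum_(1 <= i < r.+1) c i * a (n + r - i)%N.

Definition lrs_charpoly (R : comNzRingType) (r : nat) (c : nat -> R) : {poly R} :=
  'X^r - \sum_(1 <= i < r.+1) c i *: 'X^(r - i).

Definition has_charpoly (R : comNzRingType) (r : nat) (f : {poly R}) (a : nat -> R) : Prop :=
  exists c : nat -> R, f = lrs_charpoly r c /\ lrs r c a.

Definition binom_interp (R : comNzRingType) (h y : R) (a : nat -> R) : nat -> R :=
  fun n => \sum_(i < n.+1) 'C(n, i)%:R * h ^+ i * y ^+ (n - i) * a i.

From HB Require Import structures.
From mathcomp Require Import all_boot all_order all_algebra.
From mathcomp Require Import ring.
Import Order.TTheory GRing.Theory Num.Theory.
Local Open Scope ring_scope.

(* Write E for the shift of sequences, so that [shift_eval a n p] is (p(E) a)_n and [a] has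
   characteristic polynomial [f] exactly when f(E) a = 0.  By Pascal's rule the operator
   L = L^(h,y) satisfies E L = L (hE + y), hence p(E) (L a) = L (p(hE + y) a) for every
   polynomial p.  So the polynomial g with g(hX + y) = h^r f annihilates L a.  Expanding
   h^r f((X - y)/h) = sum_k (-1)^k sigma_k h^k (X - y)^(r-k) by the binomial theorem gives the
   coefficients sigmabar, and substituting hX + y into prod_j (X - (h alpha_j + y)) gives
   h^r prod_j (X - alpha_j), so the zeros of g are the h alpha_j + y. *)

Lemma sum_exprD_regroup (S : comNzRingType) (r : nat) (c : nat -> S) (x z : S) :
  \sum_(k < r.+1) c k * (x + z) ^+ (r - k) =
  \sum_(i < r.+1) (\sum_(k < i.+1) 'C(r - k, i - k)%:R * z ^+ (i - k) * c k) * x ^+ (r - i).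
Proof.
pose F i k := 'C(r - k, i - k)%:R * z ^+ (i - k) * c k * x ^+ (r - i).
transitivity (\sum_(0 <= i < r.+1) \sum_(0 <= k < r.+1 | (k < i.+1)%N) F i k); last first.
  rewrite big_mkord; apply: eq_bigr => i _.
  by rewrite big_mkord big_distrl (big_ord_widen r.+1 (F i)) ?ltn_ord.
rewrite (exchange_big_dep_nat xpredT) //= big_mkord; apply: eq_bigr => k _.
rewrite (eq_bigl (fun i => xpredT i && (k <= i)%N)) => [|i]; last by rewrite ltnS.
rewrite -big_nat_widenl // (big_addn 0 r.+1 k).
have k_le_r : (k <= r)%N by rewrite -ltnS.
rewrite subSn // exprDn big_distrr big_mkord; apply: eq_bigr => j _.
by rewrite /F addnK /= -mulr_natr addnC subnDA; ring.
Qed.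

Definition interp_coef {R : comNzRingType} (r : nat) (h y : R) (s : nat -> R) (i : nat) :
    R :=
  \sum_(k < i.+1) 'C(r - k, i - k)%:R * h ^+ k * y ^+ (i - k) * s k.

Lemma signed_sum_exprB (S : comNzRingType) (r : nat) (h y x : S) (s : nat -> S) :
  \sum_(k < r.+1) (-1) ^+ k * s k * h ^+ k * (x - y) ^+ (r - k)
  = \sum_(i < r.+1) (-1) ^+ i * interp_coef r h y s i * x ^+ (r - i).
Proof.
rewrite (sum_exprD_regroup _ _ (fun k => (-1) ^+ k * s k * h ^+ k)).
apply: eq_bigr => i _; congr (_ * _); rewrite /interp_coef big_distrr.
apply: eq_bigr => k _ /=; have k_le_i : (k <= i)%N by rewrite -ltnS.
by rewrite (exprNn y) -[in (-1) ^+ i](subnK k_le_i) exprD; ring.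
Qed.

Section ShiftOperator.
Variable R : comNzRingType.
Implicit Types (p : {poly R}) (a : nat -> R).

Definition shift_eval a n p : R := \sum_(i < size p) p`_i * a (n + i)%N.

Lemma shift_evalE a n p N : (size p <= N)%N ->
  shift_eval a n p = \sum_(i < N) p`_i * a (n + i)%N.
Proof.
move=> le_pN; rewrite /shift_eval.
rewrite (big_ord_widen _ (fun i => p`_i * a (n + i)%N) le_pN) big_mkcond.
by apply: eq_bigr => i _; case: ltnP => // /(nth_default 0) ->; rewrite mul0r.
Qed.

Fact shift_eval_is_scalar a n : scalar (shift_eval a n).
Proof.
move=> c p q; pose N := maxn (size p) (size q).
have le_sum_N : (size (c *: p + q)%R <= N)%N.
  rewrite (leq_trans (size_polyD _ _)) // geq_max leq_maxr andbT.
  exact: leq_trans (size_scale_leq _ _) (leq_maxl _ _).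
rewrite !(@shift_evalE _ _ _ N) ?leq_maxl ?leq_maxr // big_distrr -big_split.
by apply: eq_bigr => i _ /=; rewrite coefD coefZ mulrDl mulrA.
Qed.

HB.instance Definition _ a n :=
  GRing.isLinear.Build R {poly R} R *%R (shift_eval a n) (shift_eval_is_scalar a n).

Lemma shift_evalB a n : {morph shift_eval a n : p q / p - q}.
Proof. exact: raddfB. Qed.

Lemma shift_evalZ a n c p : shift_eval a n (c *: p) = c * shift_eval a n p.
Proof. exact: linearZ_LR. Qed.

Lemma shift_eval_sum a n I (s : seq I) (P : pred I) (F : I -> {poly R}) :
  shift_eval a n (\sum_(i <- s | P i) F i) = \sum_(i <- s | P i) shift_eval a n (F i).
Proof. exact: raddf_sum. Qed.

Lemma shift_evalC a n c : shift_eval a n c%:P = c * a n.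
Proof. by rewrite (@shift_evalE _ _ _ 1) ?size_polyC ?leq_b1 // big_ord1 coefC addn0. Qed.

Lemma shift_evalXn a n m : shift_eval a n 'X^m = a (n + m)%N.
Proof.
rewrite (@shift_evalE _ _ _ m.+1) ?size_polyXn // big_ord_recr /= coefXn eqxx mul1r.
by rewrite big1 ?add0r // => i _; rewrite coefXn ltn_eqF // mul0r.
Qed.

Lemma shift_evalMX a n p : shift_eval a n (p * 'X) = shift_eval a n.+1 p.
Proof.
have [->|p_nz] := eqVneq p 0; first by rewrite mul0r !raddf0.
rewrite /shift_eval size_mulX // big_ord_recl coefMX /= mul0r add0r.
by apply: eq_bigr => i _; rewrite coefMX /= addnS.
Qed.

Lemma lrs_shift_evalP r c a :
  lrs r c a <-> forall n, shift_eval a n (lrs_charpoly r c) = 0.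
Proof.
have shift_charpoly n : shift_eval a n (lrs_charpoly r c)
    = a (n + r)%N - \sum_(1 <= i < r.+1) c i * a (n + r - i)%N.
  rewrite shift_evalB shift_evalXn shift_eval_sum; congr (_ - _).
  by apply: eq_big_nat => i /andP[_ i_le_r]; rewrite shift_evalZ shift_evalXn addnBA.
split=> [rec n | ann n]; first by rewrite shift_charpoly rec subrr.
by apply/eqP; rewrite -subr_eq0 -shift_charpoly ann.
Qed.

End ShiftOperator.
Arguments shift_eval {R} a n p : simpl never.

Section BinomialInterpolation.
Variables (R : comNzRingType) (h y : R).
Implicit Types (a u v : nat -> R) (p : {poly R}).
Local Notation L := (binom_interp h y).

Lemma eq_binom_interp u v n : (forall m, u m = v m) -> L u n = L v n.
Proof. by move=> eq_uv; apply: eq_bigr => i _; rewrite eq_uv. Qed.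

Lemma binom_interpD u v n : L (fun m => u m + v m) n = L u n + L v n.
Proof. by rewrite /binom_interp -big_split; apply: eq_bigr => i _; rewrite mulrDr. Qed.

Lemma binom_interpZ c u n : L (fun m => c * u m) n = c * L u n.
Proof. by rewrite /binom_interp big_distrr; apply: eq_bigr => i _ /=; ring. Qed.

Lemma binom_interpS u n : L u n.+1 = y * L u n + h * L (fun m => u m.+1) n.
Proof.
rewrite /binom_interp big_ord_recl /= bin0 subn0.
under eq_bigr => i _ do rewrite /bump /= add1n binS subSS natrD !mulrDl.
rewrite big_split /= addrA; congr (_ + _); last first.
  by rewrite big_distrr; apply: eq_bigr => i _ /=; rewrite exprS; ring.
rewrite big_ord_recr /= bin_small // !mul0r addr0.
rewrite [in RHS]big_ord_recl /= bin0 subn0 mulrDr; congr (_ + _).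
  by rewrite expr0 exprS; ring.
rewrite big_distrr; apply: eq_bigr => i _ /=; rewrite /bump /= add1n.
by rewrite -(subnSK (ltn_ord i)) (exprS y); ring.
Qed.

Lemma binom_interp_shift_eval a p n :
  L (fun m => shift_eval a m (p \Po (h%:P * 'X + y%:P))) n = shift_eval (L a) n p.
Proof.
elim/poly_ind: p n => [|p c IH] n.
  by rewrite [RHS]raddf0 /binom_interp big1 // => i _; rewrite comp_poly0 raddf0 mulr0.
pose Q := p \Po (h%:P * 'X + y%:P); pose u m := shift_eval a m Q.
have shift_step m : shift_eval a m ((p * 'X + c%:P) \Po (h%:P * 'X + y%:P))
    = h * u m.+1 + (y * u m + c * a m).
  rewrite comp_poly_MXaddC -/Q mulrDr !raddfD /= shift_evalC mulrA [Q * _]mulrC.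
  rewrite mul_polyC -scalerAl shift_evalZ shift_evalMX.
  by rewrite [Q * _]mulrC mul_polyC shift_evalZ addrA.
rewrite (eq_binom_interp _ _ _ shift_step) !binom_interpD !binom_interpZ.
rewrite raddfD /= shift_evalMX shift_evalC -IH binom_interpS; ring.
Qed.

Lemma shift_eval_binom_interp_eq0 a f g c :
  g \Po (h%:P * 'X + y%:P) = c *: f -> (forall n, shift_eval a n f = 0) ->
  forall n, shift_eval (L a) n g = 0.
Proof.
move=> comp_g ann_f n; rewrite -binom_interp_shift_eval comp_g.
by rewrite /binom_interp big1 // => i _; rewrite shift_evalZ ann_f !mulr0.
Qed.

End BinomialInterpolation.

Definition signed_poly {R : comNzRingType} (r : nat) (s : nat -> R) : {poly R} :=
  \sum_(i < r.+1) ((-1) ^+ i * s i) *: 'X^(r - i).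

Section SignedPoly.
Variables (R : comNzRingType) (r : nat).
Implicit Types (s : nat -> R).

Lemma signed_polyE s : s 0%N = 1 ->
  'X^r + \sum_(1 <= i < r.+1) ((-1) ^+ i * s i) *: 'X^(r - i) = signed_poly r s.
Proof.
move=> s0; rewrite /signed_poly big_ord_recl /= mul1r s0 scale1r subn0.
by rewrite big_add1 /= big_mkord.
Qed.

Lemma signed_poly_lrs_charpoly s : s 0%N = 1 ->
  signed_poly r s = lrs_charpoly r (fun i => - ((-1) ^+ i * s i)).
Proof.
move=> s0; rewrite -signed_polyE // /lrs_charpoly -sumrN.
by congr (_ + _); apply: eq_bigr => i _; rewrite scaleNr opprK.
Qed.

Lemma interp_coef0 h y s : s 0%N = 1 -> interp_coef r h y s 0 = 1.
Proof. by move=> s0; rewrite /interp_coef big_ord1 /= bin0 s0 !mulr1. Qed.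

Lemma signed_poly_comp_affine h y s :
  signed_poly r (interp_coef r h y s) \Po (h%:P * 'X + y%:P) = h ^+ r *: signed_poly r s.
Proof.
set x := h%:P * 'X + y%:P.
transitivity (\sum_(i < r.+1)
    (-1) ^+ i * interp_coef r h%:P y%:P (fun k => (s k)%:P) i * x ^+ (r - i)).
  rewrite /signed_poly linear_sum; apply: eq_bigr => i _ /=.
  rewrite comp_polyZ comp_Xn_poly -mul_polyC rmorphM rmorph_sign /interp_coef rmorph_sum.
  by congr (_ * _ * _); apply: eq_bigr => k _; rewrite !rmorphM !rmorphXn rmorph_nat.
rewrite -signed_sum_exprB /signed_poly scaler_sumr; apply: eq_bigr => k _ /=.
have k_le_r : (k <= r)%N by rewrite -ltnS.
have split_hr : h%:P ^+ r = h%:P ^+ k * h%:P ^+ (r - k) :> {poly R}.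
  by rewrite -exprD subnKC.
by rewrite addrK exprMn scalerA -mul_polyC !rmorphM rmorph_sign !rmorphXn split_hr; ring.
Qed.

End SignedPoly.

Lemma comp_poly_affine_inj (F : fieldType) (c d : F) :
  c != 0 -> injective (comp_poly (c%:P * 'X + d%:P)).
Proof.
move=> c_nz p q eq_pq.
have affine_inv : (c%:P * 'X + d%:P) \Po (c^-1%:P * ('X - d%:P)) = 'X.
  rewrite comp_polyD comp_polyM !comp_polyC comp_polyX mulrA -polyCM.
  by rewrite mulfV // mul1r subrK.
by rewrite -[p]comp_polyXr -[q]comp_polyXr -affine_inv !comp_polyA /= eq_pq.
Qed.

Lemma prod_XsubC_comp_affine (R : comNzRingType) (I : finType) (c d : R)
    (alpha : I -> R) :
  (\prod_(j : I) ('X - (c * alpha j + d)%:P)) \Po (c%:P * 'X + d%:P)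
  = c ^+ #|I| *: \prod_(j : I) ('X - (alpha j)%:P).
Proof.
rewrite rmorph_prod (eq_bigr (fun j => c%:P * ('X - (alpha j)%:P))) => [|j _].
  by rewrite big_split /= prodr_const -rmorphXn mul_polyC.
by rewrite /= comp_polyB comp_polyX comp_polyC polyCD polyCM; ring.
Qed.

Theorem theorem4 (R : idomainType) (F : fieldType) (phi : {rmorphism R -> F})
  (phi_inj : injective phi) (h y : R) (hnz : h != 0) (ynz : y != 0)
  (r : nat) (a : nat -> R) (f : {poly R}) (sigma : nat -> R) (alpha : 'I_r -> F)
  (sigma0 : sigma 0%N = 1)
  (f_def : f = 'X^r + \sum_(1 <= i < r.+1) ((-1) ^+ i * sigma i) *: 'X^(r - i))
  (f_split : map_poly phi f = \prod_(j < r) ('X - (alpha j)%:P))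
  (a_lrs : has_charpoly r f a) :
  let sigmabar := fun i : nat =>
    \sum_(k < i.+1) 'C(r - k, i - k)%:R * h ^+ k * y ^+ (i - k) * sigma k in
  exists g : {poly R},
    [/\ has_charpoly r g (binom_interp h y a),
        map_poly phi g = \prod_(j < r) ('X - (phi h * alpha j + phi y)%:P)
      & g = 'X^r + \sum_(1 <= i < r.+1) ((-1) ^+ i * sigmabar i) *: 'X^(r - i)].
Proof.
move=> sigmabar; pose g := signed_poly r (interp_coef r h y sigma).
have comp_g : g \Po (h%:P * 'X + y%:P) = h ^+ r *: f.
  by rewrite signed_poly_comp_affine f_def signed_polyE.
exists g; split.
- case: a_lrs => c [f_c lrs_a].
  pose c' i := - ((-1) ^+ i * interp_coef r h y sigma i).
  have g_c' : g = lrs_charpoly r c' by rewrite /g signed_poly_lrs_charpoly ?interp_coef0.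
  exists c'; split => //; apply/lrs_shift_evalP; rewrite -g_c'.
  move: comp_g => /shift_eval_binom_interp_eq0; apply.
  by rewrite f_c; apply/lrs_shift_evalP.
- have phih_nz : phi h != 0 by rewrite -(rmorph0 phi) (inj_eq phi_inj).
  apply: (@comp_poly_affine_inj _ (phi h) (phi y) phih_nz).
  rewrite prod_XsubC_comp_affine card_ord -rmorphXn -f_split -map_polyZ -comp_g.
  by rewrite map_comp_poly rmorphD rmorphM /= map_polyX !map_polyC.
- by apply/esym/signed_polyE; apply: interp_coef0.
Qed.
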